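(* Let $\gamma\in(0,1]$. Let $E$ be an e-value for a null hypothesis (nonnegative with $\mathbb E[E]\le1$ under the null), $F$ a nonnegative random variable, and $\hat\alpha\in[0,1]$ a data-dependent threshold, all mutually arbitrarily dependent. Let $U\sim\mathrm{Uniform}[0,1]$ be independent of $(E,F,\hat\alpha)$, let $T:=\mathbf 1\{U\le(1-\gamma F^{-1})_+\}$, and define $$\tilde E^{\mathrm{SR}}:=(1-T)F+T\cdot\frac{1-\gamma}{(1-\gamma F^{-1})_+}\cdot E,\qquad \tilde E:=(1-T)F+T(1-\gamma)E.$$ Then $T_{\hat\alpha}(\tilde E^{\mathrm{SR}}):=\hat\alpha^{-1}\mathbf 1\{\tilde E^{\mathrm{SR}}\ge\hat\alpha^{-1}\}$ is an e-value (its expectation under the null is at most $1$), and $\tilde E^{\mathrm{SR}}\ge\tilde E$ almost surely.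
   Context: $x_+=\max(x,0)$, with $(1-\gamma F^{-1})_+=0$ when $F=0$. On the event $T=1$, $(1-\gamma F^{-1})_+>0$ almost surely, so $\tilde E^{\mathrm{SR}}$ is well defined almost surely (the second term is taken as $0$ when $T=0$). *)

From HB Require Import structures.
From mathcomp Require Import all_boot all_order all_algebra.
From mathcomp Require Import all_classical all_reals all_analysis.
Set Implicit Arguments. Unset Strict Implicit. Unset Printing Implicit Defensive.
Import Order.TTheory GRing.Theory Num.Theory.
Local Open Scope classical_set_scope.
Local Open Scope ring_scope.

Definition pos_part_thr {R : realType} (gamma f : R) : R :=
  if f == 0 then 0 else Num.max 0 (1 - gamma / f).

Definition Tind {R : realType} (gamma f u : R) : R :=
  if u <= pos_part_thr gamma f then 1 else 0.

Definition ESR {R : realType} (gamma e f u : R) : R :=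
  (1 - Tind gamma f u) * f +
  (if Tind gamma f u == 1 then (1 - gamma) / pos_part_thr gamma f * e else 0).

Definition Etilde {R : realType} (gamma e f u : R) : R :=
  (1 - Tind gamma f u) * f + Tind gamma f u * (1 - gamma) * e.

Definition Talpha {R : realType} (alpha x : R) : R :=
  if alpha^-1 <= x then alpha^-1 else 0.

(* Independence of the random variable U from the random vector (X,Y,Z):
   product rule on the pi-system of measurable rectangles generating
   sigma(U) and sigma(X,Y,Z). *)
Definition indep_from3 {d} {T : measurableType d} {R : realType}
  (P : probability T R) (U X Y Z : T -> R) : Prop :=
  forall A B C D : set R, measurable A -> measurable B -> measurable C ->
    measurable D ->
    P (U @^-1` A `&` (X @^-1` B `&` Y @^-1` C `&` Z @^-1` D)) =
    (P (U @^-1` A) * P (X @^-1` B `&` Y @^-1` C `&` Z @^-1` D))%E.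

(* Conditionally on (E, F, alpha), the randomisation U splits the score
   [Talpha alpha ESR] into two branches.  With probability
   p = (1 - gamma / F)_+ it equals [Talpha alpha ((1 - gamma) E / p)], which is
   at most (1 - gamma) E / p; otherwise it equals [Talpha alpha F], which
   vanishes unless F >= 1 / alpha >= 1, and then 1 - p = gamma / F, so that
   (1 - p) [Talpha alpha F] = gamma / (alpha F) <= gamma.  The conditional mean
   is therefore at most gamma + (1 - gamma) E, whose expectation is at most 1.
   Independence makes the joint law of ((E, F, alpha), U) a product measure
   (it suffices to compare both laws on measurable boxes, a pi-system), so the
   conditional mean is an inner integral in Tonelli's theorem.
   Finally ESR >= Etilde since the factor 1 / p is at least 1 on {T = 1}, and
   U > 0 almost surely excludes the degenerate case p = 0 there. *)

From HB Require Import structures.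
From mathcomp Require Import all_boot all_order all_algebra.
From mathcomp Require Import all_classical all_reals all_analysis.
From mathcomp Require Import measurable_realfun.
Import Order.TTheory GRing.Theory Num.Theory.
Local Open Scope classical_set_scope.
Local Open Scope ring_scope.

Section measurable_compositions.
Context {R : realType} {d : measure_display} {X : measurableType d}.
Implicit Types f g : X -> R.

Lemma measurable_invr : measurable_fun [set: R] (@GRing.inv R).
Proof.
rewrite (_ : GRing.inv = fun x : R => if x == 0 then 0 else x^-1); last first.
  by apply/funext => x; case: eqP => // ->; rewrite invr0.
apply: measurable_fun_if => //.
- by apply: measurable_fun_eqr => //; exact: measurable_cst.
- rewrite setTI (_ : _ @^-1` _ = [set x : R | x != 0]); last first.
    by apply/seteqP; split => x /=; case: eqP.
  apply: open_continuous_measurable_fun; first exact: open_neq.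
  by apply/in_setP => x /= x0; exact: inv_continuous.
Qed.

Lemma measurable_funV f : measurable_fun setT f ->
  measurable_fun setT (fun x => (f x)^-1).
Proof. by move=> mf; apply: measurableT_comp mf; exact: measurable_invr. Qed.

Lemma measurable_pos_part_thr (gamma : R) f : measurable_fun setT f ->
  measurable_fun setT (fun x => pos_part_thr gamma (f x)).
Proof.
move=> mf; apply: measurable_fun_ifT.
- by apply: measurable_fun_eqr => //; exact: measurable_cst.
- exact: measurable_cst.
- apply: measurable_maxr; first exact: measurable_cst.
  apply: measurable_funB; first exact: measurable_cst.
  by apply: measurable_funM; [exact: measurable_cst|exact: measurable_funV].
Qed.

Lemma measurable_Tind (gamma : R) f g : measurable_fun setT f ->
  measurable_fun setT g -> measurable_fun setT (fun x => Tind gamma (f x) (g x)).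
Proof.
move=> mf mg; apply: measurable_fun_ifT; try exact: measurable_cst.
by apply: measurable_fun_ler => //; exact: measurable_pos_part_thr.
Qed.

Lemma measurable_ESR (gamma : R) e f u : measurable_fun setT e ->
  measurable_fun setT f -> measurable_fun setT u ->
  measurable_fun setT (fun x => ESR gamma (e x) (f x) (u x)).
Proof.
move=> me mf mu.
have mT : measurable_fun setT (fun x => Tind gamma (f x) (u x)).
  exact: measurable_Tind.
apply: measurable_funD.
  apply: measurable_funM => //.
  by apply: measurable_funB => //; exact: measurable_cst.
apply: measurable_fun_ifT; last exact: measurable_cst.
  by apply: measurable_fun_eqr => //; exact: measurable_cst.
apply: measurable_funM => //; apply: measurable_funM; first exact: measurable_cst.
exact/measurable_funV/measurable_pos_part_thr.
Qed.

Lemma measurable_Talpha (a y : X -> R) : measurable_fun setT a ->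
  measurable_fun setT y -> measurable_fun setT (fun x => Talpha (a x) (y x)).
Proof.
move=> ma my; apply: measurable_fun_ifT; last exact: measurable_cst.
- by apply: measurable_fun_ler => //; exact: measurable_funV.
- exact: measurable_funV.
Qed.

End measurable_compositions.

Section pointwise.
Context {R : realType}.
Implicit Types gamma e f a u y : R.

Lemma ESRE gamma e f u : ESR gamma e f u =
  if u <= pos_part_thr gamma f then (1 - gamma) / pos_part_thr gamma f * e
  else f.
Proof.
rewrite /ESR /Tind; case: ifP => _; rewrite ?eqxx.
  by rewrite subrr mul0r add0r.
by rewrite subr0 mul1r eq_sym oner_eq0 addr0.
Qed.

Lemma pos_part_thr_ge0 gamma f : 0 <= pos_part_thr gamma f.
Proof. by rewrite /pos_part_thr; case: ifP => // _; rewrite le_max lexx. Qed.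

Lemma pos_part_thr_le1 gamma f : 0 <= gamma -> 0 <= f ->
  pos_part_thr gamma f <= 1.
Proof.
move=> g0 f0; rewrite /pos_part_thr; case: ifP => // _.
by rewrite ge_max ler01 /= lerBlDr lerDl divr_ge0.
Qed.

Lemma Talpha_ge0 a y : 0 <= a -> 0 <= Talpha a y.
Proof. by move=> a0; rewrite /Talpha; case: ifP => // _; rewrite invr_ge0. Qed.

Lemma Talpha_le a y : 0 <= y -> Talpha a y <= y.
Proof. by move=> y0; rewrite /Talpha; case: ifP. Qed.

(* [Talpha a f] vanishes unless [f >= a^-1 >= 1], and then
   [1 - pos_part_thr gamma f = gamma / f] *)
Lemma Talpha_mul_subr_pos_part_thr gamma f a : 0 <= gamma <= 1 -> 0 <= f ->
  0 <= a <= 1 -> Talpha a f * (1 - pos_part_thr gamma f) <= gamma.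
Proof.
move=> /andP[g0 g1] f0 /andP[a0 a1]; rewrite /Talpha.
case: ifP => [af|_]; last by rewrite mul0r.
have [->|a_neq0] := eqVneq a 0; first by rewrite invr0 mul0r.
have a_gt0 : 0 < a by rewrite lt_def a_neq0.
have f_ge1 : 1 <= f by rewrite (le_trans _ af) // invr_ge1 ?unitf_gt0.
have f_gt0 : 0 < f by rewrite (lt_le_trans ltr01).
have -> : pos_part_thr gamma f = 1 - gamma / f.
  rewrite /pos_part_thr gt_eqF //; apply/max_idPr.
  by rewrite subr_ge0 ler_pdivrMr // mul1r (le_trans g1).
rewrite subKr mulrCA -[leRHS]mulr1 ler_wpM2l //.
by rewrite ler_pdivrMr // mul1r.
Qed.

Lemma Talpha_ESR_mul_pos_part_thr gamma e f a : gamma <= 1 -> 0 <= e ->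
  Talpha a ((1 - gamma) / pos_part_thr gamma f * e) * pos_part_thr gamma f
  <= (1 - gamma) * e.
Proof.
move=> g1 e0; set p := pos_part_thr gamma f.
have [->|p_neq0] := eqVneq p 0; first by rewrite mulr0 mulr_ge0 ?subr_ge0.
have p_ge0 : 0 <= p := pos_part_thr_ge0 gamma f.
have c_ge0 : 0 <= (1 - gamma) / p * e by rewrite mulr_ge0 ?divr_ge0 ?subr_ge0.
apply: le_trans (ler_wpM2r p_ge0 (Talpha_le a _ c_ge0)) _.
by rewrite mulrAC divfK.
Qed.

Lemma Etilde_le_ESR gamma e f u : 0 <= gamma <= 1 -> 0 <= e -> 0 <= f ->
  0 < u -> Etilde gamma e f u <= ESR gamma e f u.
Proof.
move=> /andP[g0 g1] e0 f0 u_gt0; rewrite ESRE /Etilde /Tind.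
case: ifP => [up|_]; last by rewrite subr0 mul1r !mul0r addr0.
have p_gt0 : 0 < pos_part_thr gamma f := lt_le_trans u_gt0 up.
rewrite subrr mul0r add0r mul1r ler_wpM2r // -[leLHS]mulr1 ler_wpM2l ?subr_ge0 //.
by rewrite invr_ge1 ?unitf_gt0 ?pos_part_thr_le1.
Qed.

End pointwise.

Section measurable_prod_generators.
Context {d1 d2 : measure_display}.
Context {T1 : measurableType d1} {T2 : measurableType d2}.
Variables (H1 : set (set T1)) (H2 : set (set T2)).
Hypotheses (T1E : measurable = <<s H1 >>) (T2E : measurable = <<s H2 >>).
Hypotheses (H1T : H1 setT) (H2T : H2 setT).

Lemma measurable_prod_generators :
  @measurable _ (T1 * T2)%type = <<s [set A `*` B | A in H1 & B in H2] >>.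
Proof.
set G := [set A `*` B | A in H1 & B in H2].
apply/seteqP; split; last first.
  apply: smallest_sub; first exact: sigma_algebra_measurable.
  move=> _ [A HA] [B HB] <-.
  by apply: measurableX; [rewrite T1E|rewrite T2E]; exact: sub_sigma_algebra.
rewrite measurable_prod_measurableType.
apply: smallest_sub; first exact: smallest_sigma_algebra.
move=> _ [A mA] [B mB] <-.
pose M := g_sigma_algebraType G.
have mfst : measurable_fun [set: M] fst.
  apply: measurability T1E _ => _ [C HC <-].
  by apply: sub_sigma_algebra; exists C => //; exists setT; rewrite ?setTI ?setXT.
have msnd : measurable_fun [set: M] snd.
  apply: measurability T2E _ => _ [C HC <-].
  by apply: sub_sigma_algebra; exists setT => //; exists C; rewrite ?setTI ?setTX.
rewrite -[A]setIT -[B]setTI setXI setXT setTX.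
by apply: (@measurableI _ M); rewrite -[X in measurable X]setTI;
  [exact: mfst|exact: msnd].
Qed.

End measurable_prod_generators.

Lemma integral_ler_if {R : realType} (mu : probability R R) (p c1 c2 : R) :
  0 <= c1 -> 0 <= c2 ->
  (\int[mu]_u (if u <= p then c1 else c2)%:E =
   c1%:E * mu `]-oo, p]%classic + c2%:E * mu `]p, +oo[%classic)%E.
Proof.
move=> c1_ge0 c2_ge0.
have mf : measurable_fun setT (fun u : R => (if u <= p then c1 else c2)%:E).
  apply/measurable_EFinP; apply: measurable_fun_ifT; try exact: measurable_cst.
  by apply: measurable_fun_ler => //; exact: measurable_cst.
rewrite -(itv_setU_setT false p) ge0_integral_setU //=; last 3 first.
- by rewrite itv_setU_setT.
- by move=> u _; rewrite lee_fin; case: ifP.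
- by rewrite -setCitvl; exact/disj_setPCl.
rewrite -!integral_cst //; congr (_ + _)%E; apply: eq_integral => u.
  by rewrite inE /= in_itv /= => ->.
by rewrite inE /= in_itv /= andbT => /lt_geF ->.
Qed.

Lemma uniform_prob01_cdf {R : realType} (p : R) : 0 <= p <= 1 ->
  uniform_prob (@ltr01 R) `]-oo, p]%classic = p%:E.
Proof.
move=> /andP[p0 p1].
rewrite /uniform_prob integral_uniform_pdf.
rewrite (_ : `]-oo, p] `&` `[0, 1] = `[0, p]%classic); last first.
  apply/seteqP; split => x /=; rewrite !in_itv /= ?andbT.
    by move=> [xp /andP[-> _]].
  by move=> /andP[x0 xp]; split => //; rewrite x0 (le_trans xp).
rewrite (eq_integral (fun _ => 1%:E)); last first.
  move=> x; rewrite inE /= in_itv /= => /andP[x0 xp].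
  by rewrite /uniform_pdf x0 (le_trans xp) // subr0 invr1.
rewrite integral_cst //= lebesgue_measure_itv /= lte_fin mul1e.
by case: ltgtP p0 => // [p_gt0|<-] _; rewrite ?oppr0 ?adde0 // EFinN subr0.
Qed.

Section independent_triple.
Context {R : realType} {d : measure_display} {T : measurableType d}.
Variables (P : probability T R) (E F alpha U : {RV P >-> R}).

Definition efa (w : T) : R * (R * R) := (E w, (F w, alpha w)).

Lemma measurable_efa : measurable_fun setT efa.
Proof. by apply: measurable_fun_pair => //; exact: measurable_fun_pair. Qed.

HB.instance Definition _ := isMeasurableFun.Build _ _ _ _ efa measurable_efa.

Definition efaU (w : T) : (R * (R * R)) * R := (efa w, U w).

Lemma measurable_efaU : measurable_fun setT efaU.
Proof. exact: measurable_fun_pair measurable_efa _. Qed.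

HB.instance Definition _ := isMeasurableFun.Build _ _ _ _ efaU measurable_efaU.

Let G2 := [set C `*` D | C in @measurable _ R & D in @measurable _ R].
Let G3 := [set B `*` S | B in @measurable _ R & S in G2].
Let G := [set S `*` A | S in G3 & A in @measurable _ R].

Let measurableR : @measurable _ R = <<s measurable >>.
Proof. by rewrite smallest_id //; exact: sigma_algebra_measurable. Qed.

Let G3T : G3 setT.
Proof.
exists setT => //; exists setT; last exact: setXTT.
by exists setT => //; exists setT => //; exact: setXTT.
Qed.

Let measurableG : @measurable _ ((R * (R * R)) * R)%type = <<s G >>.
Proof.
apply: measurable_prod_generators => //.
apply: measurable_prod_generators => //.
  exact: measurable_prod_measurableType.
by exists setT => //; exists setT => //; exact: setXTT.
Qed.

Let setIG : setI_closed G.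
Proof.
move=> X Y [_ [B mB [_ [C mC [D mD <-]] <-]] [A mA <-]].
move=> [_ [B' mB' [_ [C' mC' [D' mD' <-]] <-]] [A' mA' <-]].
rewrite -!setXI; exists ((B `&` B') `*` ((C `&` C') `*` (D `&` D'))).
  exists (B `&` B'); first exact: measurableI.
  by exists ((C `&` C') `*` (D `&` D')) => //; exists (C `&` C');
    [exact: measurableI|exists (D `&` D') => //; exact: measurableI].
by exists (A `&` A') => //; exact: measurableI.
Qed.

Lemma distribution_efaU_prod : indep_from3 P U E F alpha ->
  forall W, measurable W ->
  distribution P efaU W = (distribution P efa \x distribution P U)%E W.
Proof.
move=> indep; apply: (measure_unique G (fun=> setT)) => //.
- by move=> _; exists setT => //; exists setT => //; rewrite setXTT.
- by rewrite bigcup_const.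
- move=> _ [_ [B mB [_ [C mC [D mD <-]] <-]] [A mA <-]].
  apply: esym; apply: etrans (product_measure1E _ _ _ mA) _.
    exact: measurableX mB (measurableX mC mD).
  rewrite /= [RHS](_ : _ = P (U @^-1` A `&`
      (E @^-1` B `&` F @^-1` C `&` alpha @^-1` D))); last first.
    by congr (P _); apply/seteqP; split => w; rewrite /efaU /efa /setX /=; tauto.
  rewrite indep // muleC; congr (_ * _)%E; congr (P _).
  by apply/seteqP; split => w /=; rewrite /efa /setX /=; tauto.
- by move=> _; rewrite (le_lt_trans (probability_le1 _ _)) ?ltry.
Qed.

Section fubini_sections.
Variable h : (R * (R * R)) * R -> \bar R.
Hypotheses (mh : measurable_fun setT h) (h_ge0 : forall z, (0 <= h z)%E).

Lemma measurable_integral_section :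
  measurable_fun setT (fun w => \int[distribution P U]_u h (efa w, u))%E.
Proof.
exact: measurableT_comp
  (@measurable_fun_fubini_tonelli_F _ _ _ _ _ (distribution P U) h mh h_ge0)
  measurable_efa.
Qed.

Lemma integral_efaU : indep_from3 P U E F alpha ->
  (\int[P]_w h (efaU w) = \int[P]_w \int[distribution P U]_u h (efa w, u))%E.
Proof.
move=> indep; rewrite -(ge0_integral_distribution efaU mh h_ge0).
rewrite (eq_measure_integral (distribution P efa \x distribution P U)%E);
  last first.
  by move=> W mW _; exact: distribution_efaU_prod.
rewrite fubini_tonelli1 // ge0_integral_distribution //.
- exact: measurable_fun_fubini_tonelli_F.
- by move=> x; apply: integral_ge0 => u _.
Qed.

End fubini_sections.

End independent_triple.

Section score.
Context {R : realType} (gamma : R).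
Hypothesis gamma01 : 0 <= gamma <= 1.

(* Clipping to e, f >= 0 and 0 <= a <= 1 makes the score nonnegative on all
   of R^3 x R, as Tonelli's theorem requires, without changing it on the range
   of (E, F, alpha). *)
Definition score (z : (R * (R * R)) * R) : \bar R :=
  (Talpha (Num.min (Num.max z.1.2.2 0) 1)
     (ESR gamma (Num.max z.1.1 0) (Num.max z.1.2.1 0) z.2))%:E.

Lemma scoreE e f a u : 0 <= e -> 0 <= f -> 0 <= a <= 1 ->
  score ((e, (f, a)), u) = (Talpha a (ESR gamma e f u))%:E.
Proof.
by move=> e0 f0 /andP[a0 a1]; rewrite /score /= !(max_idPl _) // (min_idPl a1).
Qed.

Lemma score_ge0 z : (0 <= score z)%E.
Proof. by rewrite lee_fin Talpha_ge0 // le_min ler01 le_max lexx orbT. Qed.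

Lemma measurable_score : measurable_fun setT score.
Proof.
have mfst2 : measurable_fun setT (fun z : (R * (R * R)) * R => z.1.2).
  exact: measurableT_comp measurable_snd measurable_fst.
have mmax0 (g : (R * (R * R)) * R -> R) : measurable_fun setT g ->
    measurable_fun setT (fun z => Num.max (g z) 0).
  by move=> mg; apply: measurable_maxr => //; exact: measurable_cst.
apply/measurable_EFinP; apply: measurable_Talpha.
  apply: measurable_minr; last exact: measurable_cst.
  by apply: mmax0; exact: measurableT_comp measurable_snd mfst2.
apply: measurable_ESR => //; apply: mmax0.
  exact: measurableT_comp measurable_fst measurable_fst.
exact: measurableT_comp measurable_fst mfst2.
Qed.

Variable mu : probability R R.
Hypothesis mu_cdf : forall p, 0 <= p <= 1 -> mu `]-oo, p]%classic = p%:E.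

Lemma integral_score_le x :
  (\int[mu]_u score (x, u) <=
   (gamma + (1 - gamma) * Num.max x.1 0)%:E)%E.
Proof.
case: x => e [f a] /=; set e' := Num.max e 0; set f' := Num.max f 0.
set a' := Num.min (Num.max a 0) 1; set p := pos_part_thr gamma f'.
have /andP[g0 g1] := gamma01.
have e'_ge0 : 0 <= e' by rewrite le_max lexx orbT.
have f'_ge0 : 0 <= f' by rewrite le_max lexx orbT.
have a'01 : 0 <= a' <= 1.
  by rewrite le_min ler01 le_max lexx orbT ge_min lexx orbT.
have p01 : 0 <= p <= 1 by rewrite pos_part_thr_ge0 pos_part_thr_le1.
have -> : (\int[mu]_u score (e, (f, a), u) =
    \int[mu]_u
      (if u <= p then Talpha a' ((1 - gamma) / p * e') else Talpha a' f')%:E)%E.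
  by apply: eq_integral => u _; rewrite /score /= ESRE; case: ifP.
rewrite integral_ler_if ?Talpha_ge0 ?(andP a'01).1 //.
have mu_gt : mu `]p, +oo[%classic = (1 - p)%:E.
  by rewrite -setCitvl probability_setC // mu_cdf.
rewrite mu_cdf // mu_gt -!EFinM -EFinD.
rewrite lee_fin addrC lerD //.
  exact: Talpha_mul_subr_pos_part_thr.
exact: Talpha_ESR_mul_pos_part_thr.
Qed.

End score.

Lemma integral_affine_evalue_le1 {R : realType} {d : measure_display}
    {T : measurableType d} (P : probability T R) (gamma : R) (E : {RV P >-> R}) :
  0 <= gamma <= 1 -> (forall w, 0 <= E w) -> ('E_P[E] <= 1)%E ->
  (\int[P]_w (gamma + (1 - gamma) * E w)%:E <= 1)%E.
Proof.
move=> /andP[g0 g1] E_ge0; rewrite unlock => EE_le1.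
have mE : measurable_fun setT (EFin \o E) by exact/measurable_EFinP.
rewrite (eq_integral (fun w => gamma%:E + (1 - gamma)%:E * (E w)%:E)%E);
  last first.
  by move=> w _; rewrite EFinD EFinM.
rewrite ge0_integralD //; last 2 first.
- by move=> w _; rewrite mule_ge0 ?lee_fin ?subr_ge0.
- exact: measurable_funeM.
have -> : (\int[P]__ gamma%:E = gamma%:E)%E.
  by have := expectation_cst P gamma; rewrite unlock.
rewrite ge0_integralZl ?lee_fin ?subr_ge0 //; last by move=> w _; rewrite lee_fin.
apply: le_trans (leeD2l _ (lee_wpmul2l _ EE_le1)) _.
  by rewrite lee_fin subr_ge0.
by rewrite mule1 -EFinD addrC subrK.
Qed.

Lemma uniform01_ae_gt0 {R : realType} {d : measure_display} {T : measurableType d}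
    {P : probability T R} {U : {RV P >-> R}} :
  (forall A, measurable A -> distribution P U A = uniform_prob (@ltr01 R) A) ->
  {ae P, forall w, 0 < U w}.
Proof.
move=> U_unif; exists (U @^-1` `]-oo, 0]); split.
- by rewrite -[X in measurable X]setTI; exact: measurable_funPT.
- change (distribution P U `]-oo, 0]%classic = 0%E).
  by rewrite U_unif // uniform_prob01_cdf // lexx ler01.
- by move=> w /= /negP; rewrite in_itv /= -leNgt.
Qed.

Theorem proposition9 (R : realType) (d : measure_display) (T : measurableType d)
  (P : probability T R) (gamma : R) (E F alpha U : {RV P >-> R}) :
  0 < gamma <= 1 ->
  (forall w, 0 <= E w) -> ('E_P[E] <= 1)%E ->
  (forall w, 0 <= F w) ->
  (forall w, 0 <= alpha w <= 1) ->
  (forall A, measurable A -> distribution P U A = uniform_prob (@ltr01 R) A) ->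
  indep_from3 P U E F alpha ->
  (\int[P]_w (Talpha (alpha w) (ESR gamma (E w) (F w) (U w)))%:E <= 1)%E /\
  {ae P, forall w, Etilde gamma (E w) (F w) (U w) <= ESR gamma (E w) (F w) (U w)}.
Proof.
move=> /andP[gamma_gt0 gamma_le1] E_ge0 EE_le1 F_ge0 alpha01 U_unif indep.
have gamma01 : 0 <= gamma <= 1 by rewrite ltW.
split; last first.
  move: (uniform01_ae_gt0 U_unif); apply: filterS => w U_gt0.
  exact: Etilde_le_ESR.
have U_cdf p : 0 <= p <= 1 -> distribution P U `]-oo, p]%classic = p%:E.
  by move=> p01; rewrite U_unif ?uniform_prob01_cdf.
rewrite (eq_integral (fun w => score gamma (efaU P E F alpha U w))); last first.
  by move=> w _; rewrite /efaU /efa scoreE.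
rewrite integral_efaU //; [|exact: measurable_score|exact: score_ge0].
apply: le_trans _ (integral_affine_evalue_le1 _ _ _ gamma01 E_ge0 EE_le1).
apply: ge0_le_integral => //.
- by move=> w _; apply: integral_ge0 => u _; exact: score_ge0.
- apply: measurable_integral_section; first exact: measurable_score.
  exact: score_ge0.
- apply/measurable_EFinP; apply: measurable_funD; first exact: measurable_cst.
  by apply: measurable_funM => //; exact: measurable_cst.
- move=> w _; have := integral_score_le _ gamma01 _ U_cdf (efa P E F alpha w).
  by rewrite /= (max_idPl (E_ge0 w)).
Qed.
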